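(* Let $M$ be a canonical dtpla and $N$ a total dtop (all of whose states are reachable) such that $[\![M]\!]=[\![N]\!]$, and let $\varphi$ be the (unique) aheadness mapping from $N$ to $M$. Then for every $s\in T_\Sigma$ and $q\in Q_N$, if $\delta_M(s)=p$ then $$q_N(s)=\varphi(q,p)[\langle\bar q,p\rangle\leftarrow\bar q_M(s)\mid\bar q\in Q_M].$$
   Context: Trees. $T_\Delta(Z)$ is the set of trees over a ranked alphabet $\Delta$ with extra nullary symbols $Z$; $t/v$ is the subtree at node $v\in\mathbb N_+^*$; $\bot$ is a special nullary symbol. A $\Sigma$-context is $C\in T_\Sigma(\{\bot\})$ with exactly one occurrence of $\bot$; $\mathcal C_\Sigma$ is their set; $C[t]$ replaces $\bot$ by $t$. Dtlas. A dtla $M$ from $\Sigma$ to $\Delta$ consists of a finite set $Q_M$ of states, a total deterministic bottom-up tree automaton with finite state set $P_M$ and transitions $\delta(a,p_1,\dots,p_k)\in P_M$, extended to $\delta_M:T_\Sigma\to P_M$ ($[\![p]\!]_M=\delta_M^{-1}(p)$), an axiom $A_M(p)\in T_\Delta(Q_M(\{x_0\}))$ for each $p$, and at most one rule $q(a(x_1\langle p_1\rangle,\dots,x_k\langle p_k\rangle))\to\mathrm{rhs}_M(q,a,p_1,\dots,p_k)\in T_\Delta(Q_M(X_k))$ for each $q,a\in\Sigma^{(k)},p_1,\dots,p_k$. Semantics: $q_M(a(s_1,\dots,s_k))=\mathrm{rhs}_M(q,a,\delta_M(s_1),\dots,\delta_M(s_k))[q'(x_i)\leftarrow q'_M(s_i)]$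 (partial function $[\![q]\!]_M$), $M(s)=A_M(\delta_M(s))[q(x_0)\leftarrow q_M(s)]$ (function $[\![M]\!]$). Total: $[\![M]\!]$ is total. A dtop is a dtla with a single look-ahead state, written $\bot$; for a dtop $N$ write $q_N(s)$, $A_N$, $\mathrm{rhs}_N(q,a)$. A dtpla is a dtla with $|P_M|\ge2$. For $C\in\mathcal C_\Sigma$, $p\in P_M$, $M(C[p])\in T_\Delta(Q_M\times P_M)$ is the output on $C$ with the hole treated as a leaf of look-ahead state $p$ and $q_M(p)=\langle q,p\rangle$; for a dtop $N$, $N(C)=N(C[\bot])$. A state $q$ is reachable if $\langle q,p\rangle$ labels a node of $M(C[p])$ for some $C,p$. $M$ is la-uniform if there is $\rho_M:Q_M\to P_M$ such that the domain of $[\![q]\!]_M$ is $[\![\rho_M(q)]\!]_M$, every $q(x_0)$ in $A_M(p)$ has $\rho_M(q)=p$, every $q'(x_i)$ in $\mathrm{rhs}_M(q,a,p_1,\dots,p_k)$ has $\rho_M(q')=p_i$, and the rule for $q,a,p_1,\dots,p_k$ exists iff $\delta(a,p_1,\dots,p_k)=\rho_M(q)$. $M$ is earliest if there is no state $q$ and $d\in\Delta$ with $q_M(s)$ having root label $d$ for all $s$ in the domain of $[\![q]\!]_M$. $M$ is canonical if it is total, la-uniform, earliest, all states are reachable, and distinct states have distinct translations $[\![q]\!]_M$. Aheadness mapping: a function $\varphi:Q_N\times P_M\to T_\Delta(Q_M\times P_M)$ such that $M(C[p])=N(C)[\langle q,\bot\rangle\leftarrow\varphi(q,p)\mid q\in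 Q_N]$ for all $C\in\mathcal C_\Sigma$, $p\in P_M$. (Under the hypotheses it exists and is unique.) *)

From mathcomp Require Import all_boot.


Unset Printing Implicit Defensive.

(* For a ranked alphabet (D, rk) and a set Z of extra nullary
   symbols, T_D(Z) is represented by well-ranked trees of type
   [tree (D + Z)]: a node [inl d] has exactly [rk d] children, a node
   [inr z] is a leaf.  T_D itself is T_D(void).                           *)
Inductive tree (A : Type) : Type := Node : A -> seq (tree A) -> tree A.
Arguments Node {A} _ _.

Definition leaf {D Z : Type} (z : Z) : tree (D + Z) := Node (inr z) [::].

Definition troot {A : Type} (t : tree A) : A := let: Node a _ := t in a.

Section WF.
Variables (D Z : Type) (rk : D -> nat).
Fixpoint wf_tree (t : tree (D + Z)) : bool :=
  match t with
  | Node (inl d) ts => (size ts == rk d) && all wf_tree ts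
  | Node (inr _) ts => nilp ts
  end.
End WF.
Arguments wf_tree {D Z} rk t.

Fixpoint nleaves {D Z : Type} (t : tree (D + Z)) : nat :=
  match t with
  | Node (inl _) ts => sumn (map nleaves ts)
  | Node (inr _) _ => 1
  end.

Fixpoint occurs {D : Type} {Z : eqType} (z : Z) (t : tree (D + Z)) : bool :=
  match t with
  | Node (inl _) ts => has (occurs z) ts
  | Node (inr z') _ => z' == z
  end.

Fixpoint subst {D Z Z' : Type} (f : Z -> tree (D + Z')) (t : tree (D + Z))
  : tree (D + Z') :=
  match t with
  | Node (inl d) ts => Node (inl d) (map (subst f) ts)
  | Node (inr z) _ => f z
  end.

Fixpoint oseq {A : Type} (l : seq (option A)) : option (seq A) :=
  match l with
  | [::] => Some [::]
  | o :: l' => match o, oseq l' with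
               | Some a, Some l'' => Some (a :: l'')
               | _, _ => None
               end
  end.

Fixpoint osubst {D Z Z' : Type} (f : Z -> option (tree (D + Z')))
  (t : tree (D + Z)) : option (tree (D + Z')) :=
  match t with
  | Node (inl d) ts => omap (Node (inl d)) (oseq (map (osubst f) ts))
  | Node (inr z) _ => f z
  end.

(* Input trees T_Sig = tree (Sig + void); Sig-contexts = tree (Sig + unit)
   with exactly one occurrence of the hole [inr tt] (= bot).               *)
Definition is_input {Sig : Type} (rkS : Sig -> nat) (s : tree (Sig + void)) :=
  wf_tree rkS s.
Definition is_context {Sig : Type} (rkS : Sig -> nat) (C : tree (Sig + unit)) :=
  wf_tree rkS C && (nleaves C == 1).

(* Deterministic top-down tree transducers with regular look-ahead.
   - [Q M]  : finite set of states,
   - [P M]  : finite set of look-ahead states,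
   - [delta M a [:: p1; ..; pk]] : bottom-up transition delta(a,p1,..,pk),
   - [axiom M p] in T_Del(Q_M({x0})) : a leaf [inr q] stands for q(x0),
   - [rhs M q a [:: p1;..;pk]] = Some r : the rule
        q(a(x1<p1>,..,xk<pk>)) -> r, r in T_Del(Q_M(X_k)),
     where a leaf [inr (q', i)] stands for q'(x_{i+1})  (0-based index);
     [None] means that there is no rule.                                  *)
Record dtla (Sig Del : Type) := Dtla {
  Q : finType;
  P : finType;
  delta : Sig -> seq P -> P;
  axiom : P -> tree (Del + Q);
  rhs : Q -> Sig -> seq P -> option (tree (Del + (Q * nat)))
}.
Arguments Q {Sig Del} d.
Arguments P {Sig Del} d.
Arguments delta {Sig Del} d _ _.
Arguments axiom {Sig Del} d _.
Arguments rhs {Sig Del} d _ _ _.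

Definition wf_dtla {Sig Del : Type} (rkS : Sig -> nat) (rkD : Del -> nat)
  (M : dtla Sig Del) : Prop :=
  (forall p, wf_tree rkD (axiom M p)) /\
  (forall q a ps r, rhs M q a ps = Some r ->
     [/\ size ps = rkS a, wf_tree rkD r &
         forall q' i, occurs (q', i) r -> i < rkS a]).

Section Semantics.
Variables (Sig Del : Type) (M : dtla Sig Del).
(* input trees may have extra leaves of type L, whose look-ahead state is
   given by [lp] and on which state q produces [lo q l]                  *)
Variables (L Z : Type) (lp : L -> P M) (lo : Q M -> L -> option (tree (Del + Z))).

Fixpoint dstate (t : tree (Sig + L)) : P M :=
  match t with
  | Node (inl a) ts => delta M a (map dstate ts)
  | Node (inr l) _ => lp l
  end.

Fixpoint qsem_gen (t : tree (Sig + L)) : Q M -> option (tree (Del + Z)) :=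
  match t with
  | Node (inl a) ts => fun q =>
      let res := map qsem_gen ts in
      match rhs M q a (map dstate ts) with
      | Some r => osubst (fun x : Q M * nat => nth (fun _ => None) res x.2 x.1) r
      | None => None
      end
  | Node (inr l) _ => fun q => lo q l
  end.

Definition msem_gen (t : tree (Sig + L)) : option (tree (Del + Z)) :=
  osubst (fun q => qsem_gen t q) (axiom M (dstate t)).
End Semantics.
Arguments dstate {Sig Del} M {L} lp t.
Arguments qsem_gen {Sig Del} M {L Z} lp lo t _.
Arguments msem_gen {Sig Del} M {L Z} lp lo t.

Definition void_elim {A : Type} (v : void) : A := match v with end.

Definition deltaM {Sig Del : Type} (M : dtla Sig Del) (s : tree (Sig + void)) : P M :=
  dstate M void_elim s.

(* q_M(s) (partial), s in T_Sig; the output lies in T_Del, here embedded in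
   T_Del(Z) for an arbitrary Z (it has no leaves from Z).                  *)
Definition qsem {Sig Del : Type} (Z : Type) (M : dtla Sig Del) (q : Q M)
  (s : tree (Sig + void)) : option (tree (Del + Z)) :=
  qsem_gen M void_elim (fun _ => void_elim) s q.
Arguments qsem {Sig Del} Z M q s.

Definition msem {Sig Del : Type} (M : dtla Sig Del) (s : tree (Sig + void))
  : option (tree (Del + void)) :=
  msem_gen M void_elim (fun _ => void_elim) s.

(* M(C[p]) in T_Del(Q_M x P_M): hole has look-ahead p, q_M(p) = <q,p> *)
Definition csem {Sig Del : Type} (M : dtla Sig Del) (C : tree (Sig + unit)) (p : P M)
  : option (tree (Del + (Q M * P M))) :=
  msem_gen M (fun _ => p) (fun q _ => Some (leaf (q, p))) C.

Section Props.
Variables (Sig Del : Type) (rkS : Sig -> nat) (M : dtla Sig Del).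

Definition total_dtla : Prop :=
  forall s, is_input rkS s -> msem M s <> None.

Definition la_uniform : Prop :=
  exists rho : Q M -> P M,
  [/\ (forall q s, is_input rkS s ->
         (qsem void M q s <> None <-> deltaM M s = rho q)),
      (forall p q, occurs q (axiom M p) -> rho q = p),
      (forall q a ps r q' i, rhs M q a ps = Some r -> occurs (q', i) r ->
         rho q' = nth (rho q') ps i) &
      (forall q a ps, size ps = rkS a ->
         (rhs M q a ps <> None <-> delta M a ps = rho q))].

Definition earliest : Prop :=
  ~ exists (q : Q M) (d : Del),
      forall s t, is_input rkS s -> qsem void M q s = Some t -> troot t = inl d.

Definition reachable (q : Q M) : Prop :=
  exists (C : tree (Sig + unit)) (p : P M) (t : tree (Del + (Q M * P M))),
    [/\ is_context rkS C, csem M C p = Some t & occurs (q, p) t].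

Definition all_reachable : Prop := forall q, reachable q.

Definition distinct_translations : Prop :=
  forall q1 q2 : Q M,
    (forall s, is_input rkS s -> qsem void M q1 s = qsem void M q2 s) -> q1 = q2.

Definition canonical : Prop :=
  [/\ total_dtla, la_uniform, earliest, all_reachable & distinct_translations].

Definition is_dtop : Prop := #|P M| = 1.
Definition is_dtpla : Prop := 2 <= #|P M|.
End Props.
Arguments total_dtla {Sig Del} rkS M.
Arguments la_uniform {Sig Del} rkS M.
Arguments earliest {Sig Del} rkS M.
Arguments reachable {Sig Del} rkS M q.
Arguments all_reachable {Sig Del} rkS M.
Arguments distinct_translations {Sig Del} rkS M.
Arguments canonical {Sig Del} rkS M.
Arguments is_dtop {Sig Del} M.
Arguments is_dtpla {Sig Del} M.

Definition same_translation {Sig Del : Type} (rkS : Sig -> nat)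
  (M N : dtla Sig Del) : Prop :=
  forall s, is_input rkS s -> msem M s = msem N s.

(* phi is an aheadness mapping from the dtop N (unique look-ahead state bot)
   to M:  M(C[p]) = N(C)[<q,bot> <- phi(q,p) | q in Q_N].                  *)
Definition aheadness {Sig Del : Type} (rkS : Sig -> nat) (M N : dtla Sig Del)
  (bot : P N) (phi : Q N -> P M -> tree (Del + (Q M * P M))) : Prop :=
  forall C (p : P M), is_context rkS C ->
    csem M C p = omap (subst (fun x : Q N * P N => phi x.1 p)) (csem N C bot).

From mathcomp Require Import all_boot.
From Stdlib Require List.

(* Since N has a single look-ahead state bot and q is reachable, there is a
   context C such that <q,bot> occurs in N(C).  Plugging the input s into the
   hole of C, the plugging lemma gives for each transducer
     M(C[s]) = M(C[p])[<q',p> <- q'_M(s)]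
             = N(C)[<q'',bot> <- phi(q'',p)][<q',p> <- q'_M(s)]   (aheadness)
     N(C[s]) = N(C)[<q'',bot> <- q''_N(s)].
   M is total and [[M]] = [[N]], so both are the same defined tree.  A
   substitution into N(C) with a given result is determined at every leaf
   occurring in N(C); at <q,bot> this yields q_N(s) = phi(q,p)[<q',p> <- q'_M(s)].
   Finally every leaf of phi(q,p) carries look-ahead state p, so the guarded
   substitution of the statement coincides with this one. *)

Lemma tree_ind_In (A : Type) (Pr : tree A -> Prop) :
  (forall a ts, (forall t, List.In t ts -> Pr t) -> Pr (Node a ts)) ->
  forall t, Pr t.
Proof.
move=> IHnode; fix IH 1 => -[a ts]; apply: IHnode.
elim: ts => [|t ts IHts] u /=; first by case.
case=> [tu|Hu]; last exact: IHts.
by rewrite -tu; exact: IH.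
Qed.

Lemma has_In {A : Type} (p : pred A) (l : seq A) :
  has p l <-> exists2 u, List.In u l & p u.
Proof.
elim: l => [|x l IH] /=; first by split=> // -[].
split=> [/orP [px|/IH [u lu pu]]|[u [<-|lu] pu]].
- by exists x; first left.
- by exists u; first right.
- by rewrite pu.
- by apply/orP; right; apply/IH; exists u.
Qed.

Lemma all_In {A : Type} (p : pred A) (l : seq A) :
  all p l <-> forall u, List.In u l -> p u.
Proof.
elim: l => [|x l IH] //=; split=> [/andP [px /IH pl] u [<-|lu] //|pl].
- exact: pl.
- by rewrite pl /=; [apply/IH => u lu; apply: pl; right | left].
Qed.

Lemma eq_map_In {A B : Type} (f g : A -> B) (l : seq A) :
  (forall x, List.In x l -> f x = g x) -> map f l = map g l.
Proof.
elim: l => //= x l IH Efg; rewrite Efg; last by left.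
by rewrite IH // => y Hy; apply: Efg; right.
Qed.

Lemma map_eq_In {A B : Type} {f g : A -> B} {l : seq A} {x : A} :
  map f l = map g l -> List.In x l -> f x = g x.
Proof. by elim: l => //= y l IH [E1 E2] [<-|Hx] //; exact: IH. Qed.

Lemma oseq_map_Some {A : Type} (l : seq A) : oseq (map Some l) = Some l.
Proof. by elim: l => //= x l ->. Qed.

Lemma oseq_SomeE {A : Type} {l : seq (option A)} {us : seq A} :
  oseq l = Some us -> l = map Some us.
Proof.
elim: l us => [|[a|] l IH] us //=; first by case=> <-.
by case E: (oseq l) => [l'|] // [<-]; rewrite (IH _ E).
Qed.

Lemma oseq_map_obind {A B : Type} (h : A -> option B) (l : seq (option A)) :
  oseq (map (obind h) l) = obind (fun us => oseq (map h us)) (oseq l).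
Proof.
elim: l => [|[a|] l IH] //=; rewrite IH.
by case: (oseq l) => [us|] //=; case: (h a).
Qed.

(* A relation holding between two families of functions indexed by a list
   (and between their defaults) holds at every position of the two lists;
   this is how rule right-hand sides look up the results for x_i. *)
Lemma nth_map_rel {T A B X : Type} (R : A -> B -> Prop)
    (F : T -> X -> A) (G : T -> X -> B) dF dG (ts : seq T) i x :
  R (dF x) (dG x) -> (forall t, List.In t ts -> R (F t x) (G t x)) ->
  R (nth dF (map F ts) i x) (nth dG (map G ts) i x).
Proof.
move=> Rd; elim: ts i => [|t ts IH] [|i] RFG //=; first by apply: RFG; left.
by apply: IH => u Hu; apply: RFG; right.
Qed.

Section Substitution.
Context {D : Type}.

Lemma osubst_comp {Z1 Z2 Z3 : Type} (f : Z1 -> option (tree (D + Z2)))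
    (g : Z2 -> option (tree (D + Z3))) (fg : Z1 -> option (tree (D + Z3))) :
  (forall x, fg x = obind (osubst g) (f x)) ->
  forall t, osubst fg t = obind (osubst g) (osubst f t).
Proof.
move=> Efg; elim/tree_ind_In => [[d|z] ts IH] /=; last exact: Efg.
rewrite (eq_map_In _ _ _ IH) (map_comp (obind (osubst g))) oseq_map_obind.
by case: (oseq _).
Qed.

Lemma osubst_Some {Z Z' : Type} (k : Z -> tree (D + Z')) t :
  osubst (fun z => Some (k z)) t = Some (subst k t).
Proof.
elim/tree_ind_In: t => [[d|z] ts IH] //=.
by rewrite (eq_map_In _ _ _ IH) (map_comp Some) oseq_map_Some.
Qed.

Lemma osubst_omap {Z1 Z2 Z3 : Type} (k : Z2 -> tree (D + Z3))
    (f : Z1 -> option (tree (D + Z2))) t :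
  omap (subst k) (osubst f t) = osubst (fun x => omap (subst k) (f x)) t.
Proof.
rewrite (@osubst_comp _ _ _ f (fun z => Some (k z))).
  by case: (osubst f t) => //= u; rewrite osubst_Some.
by move=> x; case: (f x) => //= u; rewrite osubst_Some.
Qed.

Lemma osubst_subst {Z1 Z2 Z3 : Type} (k : Z1 -> tree (D + Z2))
    (g : Z2 -> option (tree (D + Z3))) t :
  osubst g (subst k t) = osubst (fun z => osubst g (k z)) t.
Proof.
elim/tree_ind_In: t => [[d|z] ts IH] //=.
by rewrite -map_comp (eq_map_In _ _ _ IH).
Qed.

Lemma osubst_eq_occ {Z : eqType} {Z' : Type} (f f' : Z -> option (tree (D + Z'))) t :
  (forall z, occurs z t -> f z = f' z) -> osubst f t = osubst f' t.
Proof.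
elim/tree_ind_In: t => [[d|z] ts IH] /= Eff'; last exact: Eff'.
congr (omap _ (oseq _)); apply: eq_map_In => u Hu.
by apply: IH => // z Hz; apply: Eff'; apply/has_In; exists u.
Qed.

Lemma occurs_subst {Z Z' : eqType} {k : Z -> tree (D + Z')} {t z x} :
  occurs z t -> occurs x (k z) -> occurs x (subst k t).
Proof.
elim/tree_ind_In: t => [[d|z'] ts IH] /= Hz Hx; last by move/eqP: Hz => ->.
case/has_In: Hz => u Hu Hzu; apply/has_In; exists (subst k u).
  exact: List.in_map.
exact: IH.
Qed.

Lemma osubst_occurs {Z : Type} {Z' : eqType} {f : Z -> option (tree (D + Z'))} {t u x} :
  osubst f t = Some u -> occurs x u -> exists z v, f z = Some v /\ occurs x v.
Proof.
elim/tree_ind_In: t u => [[d|z] ts IH] u /=; last by move=> fz Hx; exists z, u.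
case E: (oseq _) => [us|] //= [<-] /= /has_In [u' Hu' Hx].
have : List.In (Some u') (map (osubst f) ts).
  by rewrite (oseq_SomeE E); exact: List.in_map.
by case/List.in_map_iff => t0 [Ht0 Hin]; exact: IH Ht0 Hx.
Qed.

Lemma osubst_agree_occ {Z : eqType} {Z' : Type} {f f' : Z -> option (tree (D + Z'))} {t u} :
  osubst f t = Some u -> osubst f' t = Some u -> forall z, occurs z t -> f z = f' z.
Proof.
elim/tree_ind_In: t u => [[d|z'] ts IH] u /=; last by move=> E E' z /eqP <-; rewrite E E'.
case E: (oseq (map (osubst f) ts)) => [us|] //= [<-].
case E': (oseq (map (osubst f') ts)) => [us'|] //= [Eus] z /has_In [t0 Ht0 Hz].
have Emap : map (osubst f) ts = map (osubst f') ts.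
  by rewrite (oseq_SomeE E) (oseq_SomeE E') Eus.
have : List.In (osubst f t0) (map Some us) by rewrite -(oseq_SomeE E); exact: List.in_map.
case/List.in_map_iff => u0 [Hu0 _]; apply: (IH t0 Ht0 u0 _ _ z Hz).
  by rewrite -Hu0.
by rewrite -(map_eq_In Emap Ht0) -Hu0.
Qed.
End Substitution.

Section Plugging.
Variables (Sig Del : Type) (M : dtla Sig Del).

Lemma dstate_plug (s : tree (Sig + void)) (C : tree (Sig + unit)) :
  dstate M void_elim (subst (fun _ => s) C) = dstate M (fun _ => deltaM M s) C.
Proof.
elim/tree_ind_In: C => [[a|z] ts IH] //=.
by rewrite -map_comp (eq_map_In _ _ _ IH).
Qed.

Lemma qsem_plug (s : tree (Sig + void)) (C : tree (Sig + unit)) q :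
  qsem_gen M void_elim (fun _ => void_elim) (subst (fun _ => s) C) q =
  obind (osubst (fun x : Q M * P M => qsem void M x.1 s))
    (qsem_gen M (fun _ => deltaM M s) (fun q' _ => Some (leaf (q', deltaM M s))) C q).
Proof.
elim/tree_ind_In: C q => [[a|z] ts IH] q //=.
rewrite -map_comp (eq_map_In _ _ _ (fun u _ => dstate_plug s u)).
case: (rhs M q a _) => [r|] //; apply: osubst_comp => x; rewrite -map_comp.
by apply: (nth_map_rel (fun a b => a = obind _ b)) => // u Hu; exact: IH.
Qed.

Lemma msem_plug (s : tree (Sig + void)) (C : tree (Sig + unit)) :
  msem M (subst (fun _ => s) C) =
  obind (osubst (fun x : Q M * P M => qsem void M x.1 s)) (csem M C (deltaM M s)).
Proof.
rewrite /msem /csem /msem_gen dstate_plug.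
by apply: osubst_comp => q; exact: qsem_plug.
Qed.

Lemma qsem_void (Z : Type) (s : tree (Sig + void)) q :
  qsem Z M q s = omap (subst (@void_elim (tree (Del + Z)))) (qsem void M q s).
Proof.
rewrite /qsem; elim/tree_ind_In: s q => [[a|[]] ts IH] q /=.
case: (rhs M q a _) => [r|] //; rewrite osubst_omap.
apply: osubst_eq_occ => x _.
by apply: (nth_map_rel (fun a b => a = omap _ b)) => // u Hu; exact: IH.
Qed.

Lemma qsem_hole_leaves (p : P M) (C : tree (Sig + unit)) q u x :
  qsem_gen M (fun _ => p) (fun q' _ => Some (leaf (q', p))) C q = Some u ->
  occurs x u -> x.2 = p.
Proof.
elim/tree_ind_In: C q u => [[a|z] ts IH] q u /=; last by case=> <- /eqP <-.
case: (rhs M q a _) => [r|] // Hr Hx.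
case: (osubst_occurs Hr Hx) => z [v [Hz Hv]]; move: Hz.
(* a unary property, expressed as a relation to a dummy family *)
apply: (nth_map_rel (fun a (_ : unit) => a = Some v -> x.2 = p) _ (fun _ _ => tt)
  _ (fun _ => tt)) => // t Ht Hz.
exact: IH Hz Hv.
Qed.

Lemma csem_leaves (p : P M) (C : tree (Sig + unit)) u x :
  csem M C p = Some u -> occurs x u -> x.2 = p.
Proof.
rewrite /csem /msem_gen => HC Hx.
have [z [v [Hz Hv]]] := osubst_occurs HC Hx.
exact: qsem_hole_leaves Hz Hv.
Qed.
End Plugging.

Lemma wf_plug (Sig : Type) (rkS : Sig -> nat) (s : tree (Sig + void))
    (C : tree (Sig + unit)) :
  wf_tree rkS s -> wf_tree rkS C -> wf_tree rkS (subst (fun _ => s) C).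
Proof.
move=> Hs; elim/tree_ind_In: C => [[a|z] ts IH] //= /andP [Hsz Hall].
rewrite size_map Hsz all_map /=; apply/all_In => t tts /=.
by apply: IH => //; move/all_In: Hall; apply.
Qed.

Lemma dtop_state_eq {Sig Del : Type} {N : dtla Sig Del} :
  is_dtop N -> forall p p' : P N, p = p'.
Proof. by move=> /fintype1 [b Hb] p p'; rewrite (Hb p) (Hb p'). Qed.

Section Aheadness.
Context {Sig Del : Type} {rkS : Sig -> nat} {M N : dtla Sig Del} {bot : P N}.
Context {phi : Q N -> P M -> tree (Del + (Q M * P M))}.
Hypotheses (dtopN : is_dtop N) (aheadphi : aheadness rkS M N bot phi).

Lemma aheadness_leaves {q p x} :
  reachable rkS N q -> occurs x (phi q p) -> x.2 = p.
Proof.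
case=> C [p0 [t [HC Ht Hocc]]] Hx.
rewrite (dtop_state_eq dtopN p0 bot) in Ht Hocc.
have HM := aheadphi C p HC; rewrite Ht /= in HM.
exact: csem_leaves HM (occurs_subst Hocc Hx).
Qed.

Lemma qsem_aheadness {q s} :
  total_dtla rkS M -> same_translation rkS M N ->
  reachable rkS N q -> is_input rkS s ->
  qsem void N q s = osubst (fun x => qsem void M x.1 s) (phi q (deltaM M s)).
Proof.
move=> totM eqMN [C [p0 [t [HC Ht Hocc]]]] Hs.
rewrite (dtop_state_eq dtopN p0 bot) in Ht Hocc.
set Cs := subst (fun _ => s) C.
have HCs : is_input rkS Cs by apply: wf_plug => //; case/andP: HC.
have EM : msem M Cs =
    osubst (fun x => osubst (fun y => qsem void M y.1 s) (phi x.1 (deltaM M s))) t.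
  by rewrite msem_plug (aheadphi C _ HC) Ht /= osubst_subst.
have EN : msem N Cs = osubst (fun x => qsem void N x.1 s) t.
  by rewrite msem_plug (dtop_state_eq dtopN (deltaM N s) bot) Ht.
case Eu: (msem M Cs) => [u|]; last by case: (totM Cs HCs).
rewrite Eu in EM; rewrite (eqMN _ HCs) EN in Eu.
exact: (osubst_agree_occ Eu (esym EM) _ Hocc).
Qed.
End Aheadness.

Theorem mainTheorem3
  (Sig Del : finType) (rkS : Sig -> nat) (rkD : Del -> nat)
  (M N : dtla Sig Del)
  (wfM : wf_dtla rkS rkD M) (wfN : wf_dtla rkS rkD N)
  (dtplaM : is_dtpla M) (canM : canonical rkS M)
  (dtopN : is_dtop N) (bot : P N)
  (totN : total_dtla rkS N) (reachN : all_reachable rkS N)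
  (eqMN : same_translation rkS M N)
  (phi : Q N -> P M -> tree (Del + (Q M * P M)))
  (aheadphi : aheadness rkS M N bot phi) :
  forall (s : tree (Sig + void)) (q : Q N) (p : P M),
    is_input rkS s -> deltaM M s = p ->
    qsem (Q M * P M) N q s =
    osubst (fun x : Q M * P M =>
              if x.2 == p then qsem (Q M * P M) M x.1 s else Some (leaf x))
           (phi q p).
Proof.
move=> s q p Hs Hp; case: canM => totM _ _ _ _.
rewrite qsem_void (qsem_aheadness dtopN aheadphi totM eqMN (reachN q) Hs) Hp.
rewrite osubst_omap; apply: osubst_eq_occ => x Hx.
by rewrite (aheadness_leaves dtopN aheadphi (reachN q) Hx) eqxx [RHS]qsem_void.
Qed.
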